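(* Let $S$ be a group. Let $\{G_j\}_{j\in J}$ be a family of proper subgroups $G_j\subset S$ containing exactly one subgroup from each conjugacy class of proper non-normal subgroups of $S$, and let $\{N_m\}_{m\in M}$ be the family of all proper normal subgroups of $S$. Then for every left $S$-act $A$, the geometric equivalence class $[A]=\{B : B \text{ is an } S\text{-act}, B\overset{\triangle}{\sim} A\}$ has a representation of exactly one of the following three types: (i) $[A]=\big[\coprod_{k\in K}\overline{G_k}^{(\ast)2}\amalg\coprod_{t\in T}\overline{G_t}\amalg\coprod_{l\in L}\overline{N_l}\big]$ for some subsets $K,T\subseteq J$ with $K\cap T=\emptyset$ and $L\subseteq M$; (ii) $[A]=\big[\coprod_{k\in K}\overline{G_k}\amalg\coprod_{l\in L}\overline{N_l}\amalg z\big]$ for some $K\subseteq J$, $L\subseteq M$; (iii) $[A]=\big[\coprod_{k\in K}\overline{G_k}\amalg\coprod_{l\in L}\overline{N_l}\amalg z_1\amalg z_2\big]$ for some $K\subseteq J$, $L\subseteq M$. (That is, $A$ is geometrically equivalent to an $S$-act of one of these forms, and $[A]$ does not admit representations of two different types.)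
   Context: For a monoid $S$, a left $S$-act is a nonempty set $A$ with a map $S\times A\to A$, $(s,a)\mapsto sa$, such that $1a=a$ and $(st)a=s(ta)$; homomorphisms are maps $f$ with $f(sa)=sf(a)$. Coproducts $\amalg$ of $S$-acts are disjoint unions with the induced action. For a nonempty finite set $X$, $F_X=\coprod_{x\in X}S_x$ is the free $S$-act on $X$ (a disjoint union of copies of the left regular act ${}_SS$). For an $S$-act $G$ and a binary relation $T\subseteq F_X\times F_X$, let $T'_G=\{\mu:F_X\to G \text{ homomorphism} : T\subseteq \ker\mu\}$ and $T''_G=\bigcap_{\mu\in T'_G}\ker\mu$ (the empty intersection being $F_X\times F_X$). Two $S$-acts $G_1,G_2$ are geometrically equivalent, $G_1\overset{\triangle}{\sim}G_2$, iff $T''_{G_1}=T''_{G_2}$ for every nonempty finite $X$ and every relation $T\subseteq F_X\times F_X$. For a subgroup $H$ of a group $S$, $\overline{H}={}_SS/H$ is the $S$-act of left cosets $tH$ with $s\cdot tH=stH$. For an $S$-act $A$, $A^{(\ast)I}=\coprod_{i\in I}A_i$ with each $A_i=A$; in particular $A^{(\ast)2}=A\amalg A$. The symbols $z,z_1,z_2$ denote one-element $S$-acts. *)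

From Stdlib Require Import List FunctionalExtensionality PropExtensionality ProofIrrelevance.

Set Implicit Arguments.

Record Group := {
  gcar :> Type;
  gmul : gcar -> gcar -> gcar;
  gone : gcar;
  ginv : gcar -> gcar;
  gmulA : forall x y z, gmul x (gmul y z) = gmul (gmul x y) z;
  gmul1l : forall x, gmul gone x = x;
  gmul1r : forall x, gmul x gone = x;
  gmulVl : forall x, gmul (ginv x) x = gone;
  gmulVr : forall x, gmul x (ginv x) = gone
}.

Arguments gmul {g}.
Arguments gone {g}.
Arguments ginv {g}.

Section GroupFacts.
Variable S : Group.

Lemma ginv_uniq (x y : S) : gmul x y = gone -> y = ginv x.
Proof.
  intro H. rewrite <- (gmul1l S y), <- (gmulVl S x), <- gmulA, H, gmul1r. reflexivity.
Qed.

Lemma ginvM (s t : S) : ginv (gmul s t) = gmul (ginv t) (ginv s).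
Proof.
  symmetry; apply ginv_uniq.
  rewrite gmulA, <- (gmulA S s t), gmulVr, gmul1r, gmulVr. reflexivity.
Qed.

Lemma ginv1 : ginv (@gone S) = gone.
Proof. symmetry; apply ginv_uniq. apply gmul1l. Qed.

Definition subgroup (H : S -> Prop) : Prop :=
  H gone /\ (forall x y, H x -> H y -> H (gmul x y)) /\ (forall x, H x -> H (ginv x)).

Definition proper (H : S -> Prop) : Prop := exists x, ~ H x.

Definition normal (H : S -> Prop) : Prop :=
  forall g h, H h -> H (gmul (gmul g h) (ginv g)).

Definition conjugate (H1 H2 : S -> Prop) : Prop :=
  exists g, forall x, H1 x <-> H2 (gmul (gmul (ginv g) x) g).

Definition same_set (H1 H2 : S -> Prop) : Prop := forall x, H1 x <-> H2 x.

End GroupFacts.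

Arguments subgroup {S} H.
Arguments proper {S} H.
Arguments normal {S} H.
Arguments conjugate {S} H1 H2.
Arguments same_set {S} H1 H2.

(** * Left S-acts (the carrier may be empty here; nonemptiness is imposed
    separately where required). *)
Record act (S : Group) := {
  acar :> Type;
  aop : S -> acar -> acar;
  aop1 : forall a, aop gone a = a;
  aopM : forall s t a, aop (gmul s t) a = aop s (aop t a)
}.

Arguments aop {S a0} _ _ : rename.

Section Acts.
Variable S : Group.

Definition sum_op (A B : act S) (s : S) (p : A + B) : A + B :=
  match p with inl a => inl (aop s a) | inr b => inr (aop s b) end.

Lemma sum_op1 (A B : act S) p : @sum_op A B gone p = p.
Proof. destruct p; simpl; rewrite aop1; reflexivity. Qed.

Lemma sum_opM (A B : act S) s t p :
  @sum_op A B (gmul s t) p = @sum_op A B s (@sum_op A B t p).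
Proof. destruct p; simpl; rewrite aopM; reflexivity. Qed.

Definition act_sum (A B : act S) : act S :=
  {| acar := (A + B)%type; aop := @sum_op A B; aop1 := @sum_op1 A B;
     aopM := @sum_opM A B |}.

Definition sig_op (I : Type) (F : I -> act S) (s : S) (p : {i : I & F i})
  : {i : I & F i} := existT _ (projT1 p) (aop s (projT2 p)).

Lemma sig_op1 I (F : I -> act S) p : sig_op F gone p = p.
Proof. destruct p; unfold sig_op; simpl; rewrite aop1; reflexivity. Qed.

Lemma sig_opM I (F : I -> act S) s t p :
  sig_op F (gmul s t) p = sig_op F s (sig_op F t p).
Proof. destruct p; unfold sig_op; simpl; rewrite aopM; reflexivity. Qed.

Definition act_coprod (I : Type) (F : I -> act S) : act S :=
  {| acar := {i : I & F i}; aop := sig_op F; aop1 := sig_op1 F;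
     aopM := sig_opM F |}.

Definition act_point : act S :=
  {| acar := unit; aop := fun _ u => u; aop1 := fun _ => eq_refl;
     aopM := fun _ _ _ => eq_refl |}.

Definition act_double (A : act S) : act S := act_sum A A.

(** The act S/H of left cosets tH, a coset being represented as the subset
    {x | H (t^-1 x)} of S; s . tH = stH. *)
Definition coset_car (H : S -> Prop) : Type :=
  {C : S -> Prop | exists t : S, forall x, C x <-> H (gmul (ginv t) x)}.

Definition coset_op (H : S -> Prop) (s : S) (C : coset_car H) : coset_car H.
Proof.
  refine (exist _ (fun x => proj1_sig C (gmul (ginv s) x)) _).
  destruct C as [C [t Ht]]; simpl.
  exists (gmul s t). intro x. rewrite Ht, ginvM, gmulA. tauto.
Defined.

Lemma coset_op1 H (C : coset_car H) : @coset_op H gone C = C.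
Proof.
  destruct C as [C HC]. unfold coset_op. simpl.
  apply subset_eq_compat. apply functional_extensionality; intro x.
  rewrite ginv1, gmul1l. reflexivity.
Qed.

Lemma coset_opM H s t (C : coset_car H) :
  @coset_op H (gmul s t) C = @coset_op H s (@coset_op H t C).
Proof.
  destruct C as [C HC]. unfold coset_op. simpl.
  apply subset_eq_compat. apply functional_extensionality; intro x.
  rewrite ginvM, gmulA. reflexivity.
Qed.

Definition coset_act (H : S -> Prop) : act S :=
  {| acar := coset_car H; aop := @coset_op H; aop1 := @coset_op1 H;
     aopM := @coset_opM H |}.

(** Free act F_X = coproduct of copies of S indexed by X, carrier X * S,
    s.(x,t) = (x, s t). *)
Definition free_car (X : Type) : Type := (X * S)%type.

Definition is_hom (X : Type) (B : act S) (mu : free_car X -> B) : Prop :=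
  forall (s : S) (p : free_car X), mu (fst p, gmul s (snd p)) = aop s (mu p).

(** T''_B, as a relation on F_X *)
Definition closure (X : Type) (B : act S) (T : free_car X -> free_car X -> Prop)
  (p q : free_car X) : Prop :=
  forall mu : free_car X -> B, @is_hom X B mu ->
    (forall a b, T a b -> mu a = mu b) -> mu p = mu q.

Definition finite_type (X : Type) : Prop := exists l : list X, forall x, In x l.

Definition geom_equiv (B1 B2 : act S) : Prop :=
  forall (X : Type), finite_type X -> inhabited X ->
  forall (T : free_car X -> free_car X -> Prop) (p q : free_car X),
    closure B1 T p q <-> closure B2 T p q.

End Acts.

Arguments coset_act {S} H.

Definition sub_coprod (S : Group) (I : Type) (P : I -> Prop) (F : I -> act S) : act S :=
  act_coprod (fun k : {i : I | P i} => F (proj1_sig k)).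

Definition act_type_i (S : Group) (J M : Type) (G : J -> S -> Prop) (N : M -> S -> Prop)
  (K T : J -> Prop) (L : M -> Prop) : act S :=
  act_sum (act_sum (sub_coprod K (fun j => act_double (coset_act (G j))))
                   (sub_coprod T (fun j => coset_act (G j))))
          (sub_coprod L (fun m => coset_act (N m))).

Definition act_type_ii (S : Group) (J M : Type) (G : J -> S -> Prop) (N : M -> S -> Prop)
  (K : J -> Prop) (L : M -> Prop) : act S :=
  act_sum (act_sum (sub_coprod K (fun j => coset_act (G j)))
                   (sub_coprod L (fun m => coset_act (N m))))
          (act_point S).

Definition act_type_iii (S : Group) (J M : Type) (G : J -> S -> Prop) (N : M -> S -> Prop)
  (K : J -> Prop) (L : M -> Prop) : act S :=
  act_sum (act_sum (act_sum (sub_coprod K (fun j => coset_act (G j)))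
                            (sub_coprod L (fun m => coset_act (N m))))
                   (act_point S))
          (act_point S).

Arguments act_type_i {S J M} G N K T L.
Arguments act_type_ii {S J M} G N K L.
Arguments act_type_iii {S J M} G N K L.

(** [A] has a representation of type (i); the representative must be an
    S-act, i.e. nonempty. *)
Definition rep_type_i (S : Group) (J M : Type) (G : J -> S -> Prop) (N : M -> S -> Prop)
  (A : act S) : Prop :=
  exists (K T : J -> Prop) (L : M -> Prop),
    (forall j, K j -> T j -> False) /\
    inhabited (act_type_i G N K T L) /\
    geom_equiv A (act_type_i G N K T L).

Definition rep_type_ii (S : Group) (J M : Type) (G : J -> S -> Prop) (N : M -> S -> Prop)
  (A : act S) : Prop :=
  exists (K : J -> Prop) (L : M -> Prop), geom_equiv A (act_type_ii G N K L).

Definition rep_type_iii (S : Group) (J M : Type) (G : J -> S -> Prop) (N : M -> S -> Prop)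
  (A : act S) : Prop :=
  exists (K : J -> Prop) (L : M -> Prop), geom_equiv A (act_type_iii G N K L).

Arguments rep_type_i {S J M} G N A.
Arguments rep_type_ii {S J M} G N A.
Arguments rep_type_iii {S J M} G N A.

(* Equivariant maps from an act P to B are built orbit by orbit: an orbit
   with stabilizer H may be sent to any point of B whose stabilizer contains H.
   So B separates the points of P (which is what [closure B] being finer than
   [closure P] amounts to) as soon as every stabilizer of P occurs exactly in B
   and two orbits of P with the same stabilizer H can be kept apart in B:
   because H occurs twice in B, or B has a fixed point and H is proper, or H is
   normal and proper (twist one orbit by an element outside H).  Hence the
   geometric class of an act is fixed by the conjugacy classes of its
   stabilizers, by which non-normal ones occur in two orbits when there is no
   fixed point, and by its number 0, 1 or >= 2 of fixed points; the acts of
   types (i)-(iii) realize exactly these data.  The number of fixed points is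
   itself a geometric invariant, read off from three small relations on F_X
   with |X| <= 2, which makes the three types exclusive. *)

From Stdlib Require Import List FunctionalExtensionality PropExtensionality ProofIrrelevance ClassicalEpsilon Classical.

Section GroupLemmas.
Variable S : Group.

Lemma ginvK (x : S) : ginv (ginv x) = x.
Proof. symmetry. apply ginv_uniq. apply gmulVl. Qed.

Lemma gmulKV (p x : S) : gmul (gmul p x) (ginv x) = p.
Proof. rewrite <- gmulA, gmulVr, gmul1r. reflexivity. Qed.

Lemma gmulVK (p x : S) : gmul (gmul p (ginv x)) x = p.
Proof. rewrite <- gmulA, gmulVl, gmul1r. reflexivity. Qed.

End GroupLemmas.

Ltac group_simpl :=
  repeat progress rewrite ?ginvM, ?ginvK, ?ginv1, ?gmulA, ?gmulVl, ?gmulVr,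
    ?gmulKV, ?gmulVK, ?gmul1l, ?gmul1r.

Section Subgroups.
Context {S : Group}.

Definition fullset : S -> Prop := fun _ => True.

Lemma fullset_subgroup : subgroup fullset.
Proof. repeat split. Qed.

Lemma same_set_fullset (H : S -> Prop) : (forall s, H s) -> same_set H fullset.
Proof. intros hH x. split; [split | intros _; apply hH]. Qed.

Lemma proper_of_not_full (H : S -> Prop) : ~ (forall s, H s) -> proper H.
Proof. intro h. apply NNPP. intro hp. apply h. intro s. apply NNPP. intro hs. apply hp. exists s. exact hs. Qed.

Lemma conjugate_of_same_set (H H' : S -> Prop) : same_set H H' -> conjugate H H'.
Proof. intro h. exists gone. intro x. group_simpl. apply h. Qed.

Lemma conjugate_sym (H H' : S -> Prop) : conjugate H H' -> conjugate H' H.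
Proof. intros [g hg]. exists (ginv g). intro x. rewrite hg. group_simpl. tauto. Qed.

Lemma conjugate_trans (H1 H2 H3 : S -> Prop) :
  conjugate H1 H2 -> conjugate H2 H3 -> conjugate H1 H3.
Proof. intros [g hg] [k hk]. exists (gmul g k). intro x. rewrite hg, hk. group_simpl. tauto. Qed.

Lemma normal_conjugate (H G0 : S -> Prop) : conjugate H G0 -> normal H -> normal G0.
Proof.
  intros [k hk] hn g y hy.
  assert (hky : H (gmul (gmul k y) (ginv k))) by (apply hk; group_simpl; exact hy).
  pose proof (hn (gmul (gmul k g) (ginv k)) _ hky) as h. apply hk in h. revert h. group_simpl. tauto.
Qed.

Lemma same_set_conjugate_normal (H G0 : S -> Prop) : conjugate H G0 -> normal G0 -> same_set H G0.
Proof.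
  intros [k hk] hn x. rewrite hk. split; intro h.
  - pose proof (hn k _ h) as h'. revert h'. group_simpl. tauto.
  - pose proof (hn (ginv k) _ h) as h'. revert h'. group_simpl. tauto.
Qed.

Lemma proper_conjugate (H G0 : S -> Prop) : conjugate H G0 -> proper G0 -> proper H.
Proof. intros [k hk] [y hy]. exists (gmul (gmul k y) (ginv k)). rewrite hk. group_simpl. exact hy. Qed.

Lemma not_conjugate_fullset (G0 : S -> Prop) : proper G0 -> ~ conjugate fullset G0.
Proof. intros hp hc. destruct (proper_conjugate _ _ hc hp) as [y hy]. exact (hy I). Qed.

End Subgroups.

Section Stabilizers.
Context {S : Group} {P : act S}.

Lemma aopKV (k : S) (a : P) : aop (ginv k) (aop k a) = a.
Proof. rewrite <- aopM, gmulVl, aop1. reflexivity. Qed.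

Lemma aopVK (k : S) (a : P) : aop k (aop (ginv k) a) = a.
Proof. rewrite <- aopM, gmulVr, aop1. reflexivity. Qed.

Lemma aop_inj (k : S) (a b : P) : aop k a = aop k b -> a = b.
Proof. intro h. rewrite <- (aopKV k a), h, aopKV. reflexivity. Qed.

Definition stab (q : P) : S -> Prop := fun s => aop s q = q.
Definition fixed (q : P) : Prop := forall s, aop s q = q.
Definition same_orbit (q1 q2 : P) : Prop := exists g, q2 = aop g q1.

Lemma stab_subgroup (q : P) : subgroup (stab q).
Proof.
  unfold stab. split; [|split].
  - apply aop1.
  - intros x y hx hy. rewrite aopM, hy, hx. reflexivity.
  - intros x hx. rewrite <- hx at 1. apply aopKV.
Qed.

Lemma aop_eq_iff_stab (q : P) (h h' : S) : aop h q = aop h' q <-> stab q (gmul (ginv h') h).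
Proof.
  unfold stab. rewrite aopM. split; intro e.
  - rewrite e. apply aopKV.
  - rewrite <- e at 2. rewrite aopVK. reflexivity.
Qed.

Lemma stab_aop (q : P) (g s : S) : stab (aop g q) s <-> stab q (gmul (gmul (ginv g) s) g).
Proof.
  unfold stab. rewrite !aopM. split; intro h.
  - rewrite h. apply aopKV.
  - rewrite <- h at 2. rewrite aopVK. reflexivity.
Qed.

Lemma conjugate_stab_aop (q : P) (g : S) : conjugate (stab q) (stab (aop g q)).
Proof. exists (ginv g). intro x. rewrite stab_aop. group_simpl. tauto. Qed.

Lemma same_orbit_sym (q1 q2 : P) : same_orbit q1 q2 -> same_orbit q2 q1.
Proof. intros [g e]. exists (ginv g). rewrite e, aopKV. reflexivity. Qed.

Lemma same_orbit_aop_l (q1 q2 : P) (g : S) : same_orbit (aop g q1) q2 <-> same_orbit q1 q2.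
Proof.
  split; intros [h e].
  - exists (gmul h g). rewrite aopM. exact e.
  - exists (gmul h (ginv g)). rewrite aopM, aopKV. exact e.
Qed.

Lemma same_orbit_aop_r (q1 q2 : P) (g : S) : same_orbit q1 (aop g q2) <-> same_orbit q1 q2.
Proof.
  split; intros [h e].
  - exists (gmul (ginv g) h). rewrite aopM, <- e, aopKV. reflexivity.
  - exists (gmul g h). rewrite aopM, e. reflexivity.
Qed.

Definition realized (H : S -> Prop) : Prop := exists q : P, same_set H (stab q).

Definition realized_twice (H : S -> Prop) : Prop :=
  exists q1 q2 : P, same_set H (stab q1) /\ same_set H (stab q2) /\ ~ same_orbit q1 q2.

Lemma realized_conjugate (H H' : S -> Prop) : conjugate H' H -> realized H -> realized H'.
Proof.
  intros [g hg] [q hq]. exists (aop g q). intro s. rewrite hg, (hq _), stab_aop. tauto.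
Qed.

Lemma realized_twice_conjugate (H H' : S -> Prop) :
  conjugate H' H -> realized_twice H -> realized_twice H'.
Proof.
  intros [g hg] [q1 [q2 [h1 [h2 hd]]]]. exists (aop g q1), (aop g q2).
  split; [|split].
  - intro s. rewrite hg, (h1 _), stab_aop. tauto.
  - intro s. rewrite hg, (h2 _), stab_aop. tauto.
  - rewrite same_orbit_aop_l, same_orbit_aop_r. exact hd.
Qed.

Lemma realized_same_set (H H' : S -> Prop) : same_set H H' -> realized H <-> realized H'.
Proof.
  intro h. split; apply realized_conjugate, conjugate_of_same_set;
    [|exact h]; intro x; symmetry; apply h.
Qed.

Lemma realized_twice_same_set (H H' : S -> Prop) :
  same_set H H' -> realized_twice H <-> realized_twice H'.
Proof.
  intro h. split; apply realized_twice_conjugate, conjugate_of_same_set;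
    [|exact h]; intro x; symmetry; apply h.
Qed.

Lemma realized_twice_realized (H : S -> Prop) : realized_twice H -> realized H.
Proof. intros [q1 [_ [h1 _]]]. exists q1. exact h1. Qed.

Lemma realized_twice_of_conjugate_stabs (r1 r2 : P) :
  ~ same_orbit r1 r2 -> conjugate (stab r1) (stab r2) -> realized_twice (stab r1).
Proof.
  intros hd [k hk]. exists r1, (aop k r2). split; [|split].
  - intro s. tauto.
  - intro s. rewrite hk, stab_aop. tauto.
  - rewrite same_orbit_aop_r. exact hd.
Qed.

Lemma realized_fullset : realized fullset <-> exists z : P, fixed z.
Proof.
  split.
  - intros [z hz]. exists z. intro s. apply hz. exact I.
  - intros [z hz]. exists z. intro s. split; [intros _; apply hz | split].
Qed.

Lemma realized_twice_fullset :
  realized_twice fullset <-> exists z1 z2 : P, fixed z1 /\ fixed z2 /\ z1 <> z2.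
Proof.
  split.
  - intros [z1 [z2 [h1 [h2 hd]]]]. exists z1, z2.
    split; [|split]; [intro s; apply h1; exact I | intro s; apply h2; exact I |].
    intro e. apply hd. exists gone. rewrite e, aop1. reflexivity.
  - intros [z1 [z2 [h1 [h2 hne]]]]. exists z1, z2. split; [|split].
    + intro s. split; [intros _; apply h1 | split].
    + intro s. split; [intros _; apply h2 | split].
    + intros [g e]. apply hne. rewrite e, h1. reflexivity.
Qed.

End Stabilizers.

Arguments realized {S} P H.
Arguments realized_twice {S} P H.

Section OrbitRepresentatives.
Context {S : Group} {P : act S}.

Definition orbit_rep (a : P) : P := epsilon (inhabits a) (same_orbit a).

Lemma same_orbit_rep (a : P) : same_orbit a (orbit_rep a).
Proof. apply (epsilon_spec (inhabits a) (same_orbit a)). exists a, gone. rewrite aop1. reflexivity. Qed.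

Lemma orbit_rep_aop (a : P) (g : S) : orbit_rep (aop g a) = orbit_rep a.
Proof.
  unfold orbit_rep.
  assert (e : same_orbit (aop g a) = same_orbit a).
  { apply functional_extensionality; intro x. apply propositional_extensionality. apply same_orbit_aop_l. }
  rewrite e. f_equal. apply proof_irrelevance.
Qed.

Lemma orbit_rep_decomp (a : P) : exists h, a = aop h (orbit_rep a).
Proof. apply same_orbit_sym, same_orbit_rep. Qed.

Lemma orbit_rep_same_orbit (a b : P) : same_orbit a b -> orbit_rep a = orbit_rep b.
Proof. intros [g e]. rewrite e, orbit_rep_aop. reflexivity. Qed.

Lemma orbit_rep_idem (a : P) : orbit_rep (orbit_rep a) = orbit_rep a.
Proof. symmetry. apply orbit_rep_same_orbit, same_orbit_rep. Qed.

End OrbitRepresentatives.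

Section Equivariant.
Context {S : Group} {P Q : act S}.

Definition equivariant (f : P -> Q) : Prop := forall s a, f (aop s a) = aop s (f a).

Lemma equivariant_extension (d : P -> Q) (hd : forall x s, stab x s -> stab (d x) s) :
  exists phi : P -> Q, equivariant phi /\
    forall a h, a = aop h (orbit_rep a) -> phi a = aop h (d (orbit_rep a)).
Proof.
  assert (wd : forall a h h', a = aop h (orbit_rep a) -> a = aop h' (orbit_rep a) ->
             aop h (d (orbit_rep a)) = aop h' (d (orbit_rep a))).
  { intros a h h' e e'. apply aop_eq_iff_stab, hd, aop_eq_iff_stab. rewrite <- e, <- e'. reflexivity. }
  set (h_of := fun a : P => proj1_sig (constructive_indefinite_description _ (orbit_rep_decomp a))).
  assert (h_of_spec : forall a, a = aop (h_of a) (orbit_rep a)).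
  { intro a. unfold h_of. destruct (constructive_indefinite_description _ _) as [h e]. exact e. }
  exists (fun a => aop (h_of a) (d (orbit_rep a))). split.
  - intros s a. rewrite <- aopM, <- (orbit_rep_aop a s). apply wd; [apply h_of_spec |].
    rewrite orbit_rep_aop, aopM, <- h_of_spec. reflexivity.
  - intros a h e. apply wd; [apply h_of_spec | exact e].
Qed.

End Equivariant.

Section Separation.
Context {S : Group} (P Q : act S).

Hypothesis realized_le : forall H, subgroup H -> realized P H -> realized Q H.
Hypothesis realized_twice_le : forall H, subgroup H -> realized_twice P H ->
  realized_twice Q H \/ (realized Q fullset /\ proper H) \/ (normal H /\ proper H).

Lemma exists_same_stab (x : P) : exists q : Q, same_set (stab x) (stab q).
Proof. apply realized_le; [apply stab_subgroup | exists x; intro s; tauto]. Qed.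

Lemma separate_orbits (r1 r2 : P) (g : S) : ~ same_orbit r1 r2 ->
  exists q1 q2 : Q, (forall s, stab r1 s -> stab q1 s) /\
                    (forall s, stab r2 s -> stab q2 s) /\ aop g q1 <> q2.
Proof.
  intro hd. destruct (exists_same_stab r1) as [q1 h1], (exists_same_stab r2) as [q2 h2].
  destruct (classic (conjugate (stab r1) (stab r2))) as [hc | hnc].
  2:{ exists q1, q2. split; [intro s; apply h1 | split; [intro s; apply h2 |]].
      intro e. apply hnc. apply (conjugate_trans _ (stab q1)); [exact (conjugate_of_same_set _ _ h1) |].
      apply (conjugate_trans _ (stab (aop g q1))); [apply conjugate_stab_aop |].
      rewrite e. apply conjugate_of_same_set. intro s. symmetry. apply h2. }
  pose proof hc as [k hk].
  destruct (realized_twice_le _ (stab_subgroup r1) (realized_twice_of_conjugate_stabs _ _ hd hc))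
    as [[p1 [p2 [e1 [e2 hp]]]] | [[[z hz] [y hy]] | [hn [y hy]]]].
  - (* [Q] has two orbits with stabilizer [stab r1]: send [r2] into the second one *)
    exists p1, (aop (ginv k) p2). split; [intro s; apply e1 | split].
    + intros s hs. rewrite stab_aop, <- (e2 _), hk. group_simpl. exact hs.
    + intro e. apply hp. exists (gmul k g). rewrite aopM, e, aopVK. reflexivity.
  - (* send [r1] to a fixed point, which [r2]'s image (proper stabilizer) is not *)
    exists z, q2. split; [intros s _; apply hz; exact I | split; [intro s; apply h2 |]].
    intro e. apply hy. rewrite hk, (h2 _), <- e. unfold stab.
    rewrite (proj1 (hz g) I). apply hz. exact I.
  - (* normal stabilizer: both go to one orbit, [r2] twisted by [y] outside [stab r1] *)
    assert (h21 : same_set (stab r2) (stab r1)).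
    { apply same_set_conjugate_normal; [apply conjugate_sym; exact hc | exact hn]. }
    exists q1, (aop g (aop y q1)). split; [intro s; apply h1 | split].
    + intros s hs. rewrite <- aopM, stab_aop, <- (h1 _).
      pose proof (hn (ginv (gmul g y)) s (proj1 (h21 s) hs)) as h. revert h. group_simpl. tauto.
    + intro e. apply aop_inj in e. apply hy, h1. symmetry. exact e.
Qed.

Lemma separating_hom (a1 a2 : P) : a1 <> a2 ->
  exists phi : P -> Q, equivariant phi /\ phi a1 <> phi a2.
Proof.
  intro hne.
  destruct (orbit_rep_decomp a1) as [h1 e1], (orbit_rep_decomp a2) as [h2 e2].
  destruct (choice _ exists_same_stab) as [df hdf].
  destruct (classic (orbit_rep a1 = orbit_rep a2)) as [er | ner].
  - destruct (equivariant_extension df (fun x s => proj1 (hdf x s))) as [phi [hphi hv]].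
    exists phi. split; [exact hphi |]. intro e.
    rewrite (hv a1 h1 e1), (hv a2 h2 e2), <- er, aop_eq_iff_stab, <- (hdf _ _) in e.
    apply hne. rewrite e1, e2, <- er. apply aop_eq_iff_stab. exact e.
  - assert (hd : ~ same_orbit (orbit_rep a1) (orbit_rep a2)).
    { intro ho. apply ner. rewrite <- (orbit_rep_idem a1), <- (orbit_rep_idem a2).
      apply orbit_rep_same_orbit. exact ho. }
    destruct (separate_orbits _ _ (gmul (ginv h2) h1) hd) as [q1 [q2 [hq1 [hq2 hq]]]].
    assert (hd' : forall x, exists q, (forall s, stab x s -> stab q s) /\
                  (x = orbit_rep a1 -> q = q1) /\ (x = orbit_rep a2 -> q = q2)).
    { intro x. destruct (classic (x = orbit_rep a1)) as [-> | n1].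
      - exists q1. split; [exact hq1 | split; [reflexivity | intro c; contradiction]].
      - destruct (classic (x = orbit_rep a2)) as [-> | n2].
        + exists q2. split; [exact hq2 | split; [intro c; contradiction | reflexivity]].
        + exists (df x). split; [intro s; apply hdf | split; intro c; contradiction]. }
    destruct (choice _ hd') as [d hdd].
    destruct (equivariant_extension d (fun x => proj1 (hdd x))) as [phi [hphi hv]].
    exists phi. split; [exact hphi |].
    rewrite (hv a1 h1 e1), (hv a2 h2 e2), (proj1 (proj2 (hdd _)) eq_refl), (proj2 (proj2 (hdd _)) eq_refl).
    intro e. apply hq. rewrite aopM, e, aopKV. reflexivity.
Qed.

Lemma closure_le (X : Type) (T : free_car S X -> free_car S X -> Prop) (p q : free_car S X) :
  closure Q T p q -> closure P T p q.
Proof.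
  intros hc mu hmu hT. apply NNPP. intro hne.
  destruct (separating_hom _ _ hne) as [phi [hphi hne']]. apply hne'.
  apply (hc (fun x => phi (mu x))).
  - intros s x. rewrite hmu. apply hphi.
  - intros a b hab. rewrite (hT a b hab). reflexivity.
Qed.

End Separation.

Section Criterion.
Context {S : Group}.

Lemma closure_le_of_realized (P Q : act S) :
  (forall H, subgroup H -> realized P H -> realized Q H) ->
  (forall H, subgroup H -> proper H -> ~ normal H -> ~ realized Q fullset ->
     realized_twice P H -> realized_twice Q H) ->
  (realized_twice P fullset -> realized_twice Q fullset) ->
  forall X T (p q : free_car S X), closure Q T p q -> closure P T p q.
Proof.
  intros hr hrt hfull. apply closure_le; [exact hr |]. intros H hs hP.
  destruct (classic (forall s, H s)) as [hf | hnf].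
  { left. pose proof (same_set_fullset _ hf) as e.
    apply (realized_twice_same_set _ _ e), hfull, (realized_twice_same_set _ _ e), hP. }
  pose proof (proper_of_not_full _ hnf) as hp.
  destruct (classic (normal H)) as [hn | hnn]; [auto |].
  destruct (classic (realized Q fullset)); auto.
Qed.

Lemma geom_equiv_of_realized (P Q : act S) :
  (forall H, subgroup H -> realized P H <-> realized Q H) ->
  (forall H, subgroup H -> proper H -> ~ normal H -> ~ realized P fullset ->
     realized_twice P H <-> realized_twice Q H) ->
  (realized_twice P fullset <-> realized_twice Q fullset) -> geom_equiv P Q.
Proof.
  intros hr hrt hfull X _ _ T p q.
  pose proof (hr _ fullset_subgroup) as hr_full.
  split; apply closure_le_of_realized; try (intros H hs; apply hr; exact hs); try apply hfull;
    intros H hs hp hn hno; apply (hrt H hs hp hn); tauto.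
Qed.

Lemma geom_equiv_sym (P Q : act S) : geom_equiv P Q -> geom_equiv Q P.
Proof. intros h X hX hi T p q. symmetry. apply h; assumption. Qed.

Lemma geom_equiv_trans (P Q R : act S) : geom_equiv P Q -> geom_equiv Q R -> geom_equiv P R.
Proof. intros h1 h2 X hX hi T p q. rewrite (h1 X hX hi), (h2 X hX hi). reflexivity. Qed.

End Criterion.

Section FixedPointInvariants.
Context {S : Group}.

Definition eval_hom {X : Type} {B : act S} (b : X -> B) : free_car S X -> B :=
  fun p => aop (snd p) (b (fst p)).

Lemma eval_hom_is_hom {X : Type} {B : act S} (b : X -> B) : is_hom B (eval_hom b).
Proof. intros s p. apply aopM. Qed.

Lemma is_hom_eval {X : Type} {B : act S} (mu : free_car S X -> B) :
  is_hom B mu -> forall x s, mu (x, s) = aop s (mu (x, gone)).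
Proof. intros h x s. rewrite <- h. simpl. rewrite gmul1r. reflexivity. Qed.

Lemma finite_unit : finite_type unit.
Proof. exists (tt :: nil). intros []. left. reflexivity. Qed.

Lemma finite_bool : finite_type bool.
Proof. exists (true :: false :: nil). intros []; simpl; auto. Qed.

Definition rel_none : free_car S unit -> free_car S unit -> Prop := fun _ _ => False.

Definition rel_fix_false : free_car S bool -> free_car S bool -> Prop :=
  fun a b => exists t, a = (false, t) /\ b = (false, gone).

Definition rel_fix_all : free_car S bool -> free_car S bool -> Prop :=
  fun a b => exists x t, a = (x, t) /\ b = (x, gone).

Lemma closure_rel_none (B : act S) (s : S) :
  closure B rel_none (tt, gone) (tt, s) <-> forall b : B, aop s b = b.
Proof.
  split.
  - intros h b. pose proof (h (eval_hom (fun _ => b)) (eval_hom_is_hom _) (fun _ _ f => False_ind _ f)) as e.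
    unfold eval_hom in e. simpl in e. rewrite aop1 in e. symmetry. exact e.
  - intros h mu hmu _. rewrite (is_hom_eval mu hmu tt s), h. reflexivity.
Qed.

Lemma closure_rel_fix_false (B : act S) (s : S) :
  closure B rel_fix_false (true, gone) (true, s) <->
  ((exists z : B, fixed z) -> forall b : B, aop s b = b).
Proof.
  split.
  - intros h [z hz] b.
    pose proof (h (eval_hom (fun x : bool => if x then b else z)) (eval_hom_is_hom _)) as e.
    unfold eval_hom in e. simpl in e. rewrite aop1 in e. symmetry. apply e.
    intros a c [t [-> ->]]. unfold eval_hom. simpl. rewrite aop1. apply hz.
  - intros h mu hmu hT. rewrite (is_hom_eval mu hmu true s), h; [reflexivity |].
    exists (mu (false, gone)). intro t. rewrite <- (is_hom_eval mu hmu). apply hT. exists t. split; reflexivity.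
Qed.

Lemma closure_rel_fix_all (B : act S) :
  closure B rel_fix_all (false, gone) (true, gone) <->
  (forall z1 z2 : B, fixed z1 -> fixed z2 -> z1 = z2).
Proof.
  split.
  - intros h z1 z2 h1 h2.
    pose proof (h (eval_hom (fun x : bool => if x then z2 else z1)) (eval_hom_is_hom _)) as e.
    unfold eval_hom in e. simpl in e. rewrite !aop1 in e. apply e.
    intros a b [x [t [-> ->]]]. unfold eval_hom. simpl. rewrite aop1. destruct x; [apply h2 | apply h1].
  - intros h mu hmu hT. apply h; intro t; rewrite <- (is_hom_eval mu hmu);
      apply hT; eexists _, t; split; reflexivity.
Qed.

Lemma geom_equiv_realized_twice_fullset (B B' : act S) :
  geom_equiv B B' -> realized_twice B fullset -> realized_twice B' fullset.
Proof.
  intros h. rewrite !realized_twice_fullset. intros [z1 [z2 [h1 [h2 hne]]]].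
  apply NNPP. intro hno. apply hne.
  apply (closure_rel_fix_all B); [| exact h1 | exact h2].
  apply (h bool finite_bool (inhabits true)), closure_rel_fix_all.
  intros w1 w2 hw1 hw2. apply NNPP. intro hw. apply hno. exists w1, w2. auto.
Qed.

(* [~ realized B fullset] cannot be dropped: the empty act is geometrically
   equivalent to the one-point act. *)
Lemma geom_equiv_inhabited (B B' : act S) :
  geom_equiv B B' -> inhabited B -> ~ realized B fullset -> inhabited B'.
Proof.
  intros h [b] hnf. rewrite realized_fullset in hnf.
  destruct (not_all_ex_not _ _ (fun hb => hnf (ex_intro _ b hb))) as [s hs].
  apply NNPP. intro hno. apply hs.
  apply (closure_rel_none B), (h unit finite_unit (inhabits tt)), closure_rel_none.
  intro b'. exfalso. exact (hno (inhabits b')).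
Qed.

Lemma geom_equiv_realized_fullset (B B' : act S) :
  geom_equiv B B' -> inhabited B' -> realized B fullset -> realized B' fullset.
Proof.
  intros h hB' hf. apply NNPP. intro hnf.
  destruct hB' as [b']. pose proof hnf as hnf'. rewrite realized_fullset in hnf'.
  destruct (not_all_ex_not _ _ (fun hb => hnf' (ex_intro _ b' hb))) as [s hs].
  assert (hmoved : ~ forall b : B, aop s b = b).
  { intro hB. apply hs. apply (closure_rel_none B'), (h unit finite_unit (inhabits tt)), closure_rel_none. exact hB. }
  apply hmoved, (closure_rel_fix_false B); [| apply realized_fullset; exact hf].
  apply (h bool finite_bool (inhabits true)), closure_rel_fix_false.
  intro hz. exfalso. apply hnf, realized_fullset. exact hz.
Qed.

End FixedPointInvariants.

Section RealizedInCoproducts.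
Context {S : Group}.

Lemma stab_inl {P Q : act S} (x : P) s : stab (P := act_sum P Q) (inl x) s <-> stab x s.
Proof. unfold stab. simpl. split; [intro e; injection e; auto | intro e; rewrite e; reflexivity]. Qed.

Lemma stab_inr {P Q : act S} (x : Q) s : stab (P := act_sum P Q) (inr x) s <-> stab x s.
Proof. unfold stab. simpl. split; [intro e; injection e; auto | intro e; rewrite e; reflexivity]. Qed.

Lemma same_orbit_inl {P Q : act S} (x y : P) :
  same_orbit (P := act_sum P Q) (inl x) (inl y) <-> same_orbit x y.
Proof. split; intros [g e]; exists g; [injection e; auto | rewrite e; reflexivity]. Qed.

Lemma same_orbit_inr {P Q : act S} (x y : Q) :
  same_orbit (P := act_sum P Q) (inr x) (inr y) <-> same_orbit x y.
Proof. split; intros [g e]; exists g; [injection e; auto | rewrite e; reflexivity]. Qed.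

Lemma realized_sum (P Q : act S) H : realized (act_sum P Q) H <-> realized P H \/ realized Q H.
Proof.
  split.
  - intros [[x | x] hx]; [left | right]; exists x; intro s;
      [rewrite (hx s), stab_inl | rewrite (hx s), stab_inr]; tauto.
  - intros [[x hx] | [x hx]]; [exists (inl x) | exists (inr x)]; intro s;
      [rewrite stab_inl | rewrite stab_inr]; apply hx.
Qed.

Lemma realized_twice_sum (P Q : act S) H : realized_twice (act_sum P Q) H <->
  realized_twice P H \/ realized_twice Q H \/ (realized P H /\ realized Q H).
Proof.
  split.
  - intros [[x1 | x1] [[x2 | x2] [h1 [h2 hd]]]].
    + left. exists x1, x2. rewrite same_orbit_inl in hd.
      split; [|split; [|exact hd]]; intro s; [rewrite (h1 s), stab_inl | rewrite (h2 s), stab_inl]; tauto.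
    + right; right. split; [exists x1 | exists x2]; intro s;
        [rewrite (h1 s), stab_inl | rewrite (h2 s), stab_inr]; tauto.
    + right; right. split; [exists x2 | exists x1]; intro s;
        [rewrite (h2 s), stab_inl | rewrite (h1 s), stab_inr]; tauto.
    + right; left. exists x1, x2. rewrite same_orbit_inr in hd.
      split; [|split; [|exact hd]]; intro s; [rewrite (h1 s), stab_inr | rewrite (h2 s), stab_inr]; tauto.
  - intros [[x1 [x2 [h1 [h2 hd]]]] | [[x1 [x2 [h1 [h2 hd]]]] | [[x1 h1] [x2 h2]]]].
    + exists (inl x1), (inl x2). rewrite same_orbit_inl.
      split; [|split; [|exact hd]]; intro s; rewrite stab_inl; [apply h1 | apply h2].
    + exists (inr x1), (inr x2). rewrite same_orbit_inr.
      split; [|split; [|exact hd]]; intro s; rewrite stab_inr; [apply h1 | apply h2].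
    + exists (inl x1), (inr x2). split; [|split].
      * intro s. rewrite stab_inl. apply h1.
      * intro s. rewrite stab_inr. apply h2.
      * intros [g e]. discriminate e.
Qed.

Lemma realized_double (P : act S) H : realized (act_double P) H <-> realized P H.
Proof. unfold act_double. rewrite realized_sum. tauto. Qed.

Lemma realized_twice_double (P : act S) H :
  ~ realized_twice P H -> realized_twice (act_double P) H <-> realized P H.
Proof. intro hno. unfold act_double. rewrite realized_twice_sum. tauto. Qed.

Lemma stab_existT {I : Type} (F : I -> act S) i (x : F i) s :
  stab (P := act_coprod F) (existT _ i x) s <-> stab x s.
Proof.
  unfold stab. simpl. unfold sig_op. simpl.
  split; [intro e; apply inj_pairT2 in e; exact e | intro e; rewrite e; reflexivity].
Qed.

Lemma realized_coprod {I : Type} (F : I -> act S) H :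
  realized (act_coprod F) H <-> exists i, realized (F i) H.
Proof.
  split.
  - intros [[i x] hx]. exists i, x. intro s. rewrite (hx s), stab_existT. tauto.
  - intros [i [x hx]]. exists (existT _ i x). intro s. rewrite stab_existT. apply hx.
Qed.

Lemma realized_twice_coprod {I : Type} (F : I -> act S) H :
  realized_twice (act_coprod F) H <->
  (exists i, realized_twice (F i) H) \/
  (exists i i', i <> i' /\ realized (F i) H /\ realized (F i') H).
Proof.
  split.
  - intros [[i x] [[i' y] [h1 [h2 hd]]]].
    assert (h1' : same_set H (stab x)) by (intro s; rewrite (h1 s), stab_existT; tauto).
    assert (h2' : same_set H (stab y)) by (intro s; rewrite (h2 s), stab_existT; tauto).
    destruct (classic (i = i')) as [<- | ne].
    + left. exists i, x, y. split; [exact h1' | split; [exact h2' |]].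
      intros [g e]. apply hd. exists g. rewrite e. reflexivity.
    + right. exists i, i'. split; [exact ne | split; [exists x | exists y]; assumption].
  - intros [[i [x [y [h1 [h2 hd]]]]] | [i [i' [ne [[x h1] [y h2]]]]]].
    + exists (existT _ i x), (existT _ i y). split; [|split].
      * intro s. rewrite stab_existT. apply h1.
      * intro s. rewrite stab_existT. apply h2.
      * intros [g e]. apply hd. exists g. apply inj_pairT2 in e. exact e.
    + exists (existT _ i x), (existT _ i' y). split; [|split].
      * intro s. rewrite stab_existT. apply h1.
      * intro s. rewrite stab_existT. apply h2.
      * intros [g e]. apply ne. injection e. auto.
Qed.

Lemma realized_sub_coprod {I : Type} (K : I -> Prop) (F : I -> act S) H :
  realized (sub_coprod K F) H <-> exists i, K i /\ realized (F i) H.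
Proof.
  unfold sub_coprod. rewrite realized_coprod. split.
  - intros [[i hi] h]. exists i. auto.
  - intros [i [hi h]]. exists (exist _ i hi). exact h.
Qed.

Lemma realized_twice_sub_coprod {I : Type} (K : I -> Prop) (F : I -> act S) H :
  realized_twice (sub_coprod K F) H <->
  (exists i, K i /\ realized_twice (F i) H) \/
  (exists i i', K i /\ K i' /\ i <> i' /\ realized (F i) H /\ realized (F i') H).
Proof.
  unfold sub_coprod. rewrite realized_twice_coprod. split.
  - intros [[[i hi] h] | [[i hi] [[i' hi'] [ne [h1 h2]]]]].
    + left. exists i. auto.
    + right. exists i, i'. repeat split; auto.
      intros <-. apply ne. f_equal. apply proof_irrelevance.
  - intros [[i [hi h]] | [i [i' [hi [hi' [ne [h1 h2]]]]]]].
    + left. exists (exist _ i hi). exact h.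
    + right. exists (exist _ i hi), (exist _ i' hi'). repeat split; auto.
      intro e. apply ne. injection e. auto.
Qed.

Lemma realized_point H : realized (act_point S) H <-> forall s, H s.
Proof.
  split.
  - intros [q hq] s. apply hq. reflexivity.
  - intro h. exists tt. intro s. split; [reflexivity | intros _; apply h].
Qed.

Lemma not_realized_twice_point H : ~ realized_twice (act_point S) H.
Proof. intros [[] [[] [_ [_ hd]]]]. apply hd. exists gone. reflexivity. Qed.

End RealizedInCoproducts.

Section Cosets.
Context {S : Group} (G0 : S -> Prop) (hG0 : subgroup G0).

Lemma coset_eq (C1 C2 : coset_car S G0) :
  (forall x, proj1_sig C1 x <-> proj1_sig C2 x) -> C1 = C2.
Proof.
  destruct C1 as [c1 p1], C2 as [c2 p2]. simpl. intro h. apply subset_eq_compat.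
  apply functional_extensionality; intro x. apply propositional_extensionality. apply h.
Qed.

Lemma coset_op_val (s : S) (C : coset_car S G0) x :
  proj1_sig (aop (a0 := coset_act G0) s C) x <-> proj1_sig C (gmul (ginv s) x).
Proof. reflexivity. Qed.

Lemma stab_coset (C : coset_car S G0) (t : S)
  (ht : forall x, proj1_sig C x <-> G0 (gmul (ginv t) x)) (s : S) :
  stab (P := coset_act G0) C s <-> G0 (gmul (gmul (ginv t) s) t).
Proof.
  destruct hG0 as [h1 [hM hV]]. unfold stab. split.
  - intro e. assert (hc : proj1_sig C t) by (apply ht; rewrite gmulVl; exact h1).
    rewrite <- e, coset_op_val, ht in hc. apply hV in hc. revert hc. group_simpl. tauto.
  - intro hu. apply coset_eq. intro x. rewrite coset_op_val, !ht. split; intro h.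
    + pose proof (hM _ _ hu h) as h'. revert h'. group_simpl. tauto.
    + pose proof (hM _ _ (hV _ hu) h) as h'. revert h'. group_simpl. tauto.
Qed.

Lemma realized_coset H : realized (coset_act G0) H <-> conjugate H G0.
Proof.
  split.
  - intros [C hC]. destruct (proj2_sig C) as [t ht]. exists t. intro x.
    rewrite (hC x). apply stab_coset. exact ht.
  - intros [g hg]. exists (exist _ (fun x => G0 (gmul (ginv g) x)) (ex_intro _ g (fun x => iff_refl _))).
    intro s. rewrite hg, stab_coset; [reflexivity | intro x; reflexivity].
Qed.

Lemma not_realized_twice_coset H : ~ realized_twice (coset_act G0) H.
Proof.
  intros [C1 [C2 [_ [_ hd]]]]. apply hd.
  destruct (proj2_sig C1) as [t1 ht1], (proj2_sig C2) as [t2 ht2].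
  exists (gmul t2 (ginv t1)). apply coset_eq. intro x.
  rewrite coset_op_val, ht1, ht2. group_simpl. reflexivity.
Qed.

End Cosets.

Section CosetFamilies.
Context {S : Group} {I : Type} (F : I -> S -> Prop).
Hypothesis F_proper_subgroup : forall i, subgroup (F i) /\ proper (F i).
Hypothesis F_nonconjugate : forall i i', conjugate (F i) (F i') -> i = i'.

Lemma conjugate_family_unique H i i' : conjugate H (F i) -> conjugate H (F i') -> i = i'.
Proof.
  intros h h'. apply F_nonconjugate. apply (conjugate_trans _ H); [apply conjugate_sym |]; assumption.
Qed.

Lemma realized_cosets (K : I -> Prop) H :
  realized (sub_coprod K (fun i => coset_act (F i))) H <-> exists i, K i /\ conjugate H (F i).
Proof.
  rewrite realized_sub_coprod. split; intros [i [hi h]]; exists i;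
    rewrite realized_coset in *; auto; apply F_proper_subgroup.
Qed.

Lemma not_realized_twice_cosets (K : I -> Prop) H :
  ~ realized_twice (sub_coprod K (fun i => coset_act (F i))) H.
Proof.
  rewrite realized_twice_sub_coprod. intros [[i [_ h]] | [i [i' [_ [_ [ne [h1 h2]]]]]]].
  - exact (not_realized_twice_coset _ _ h).
  - apply ne. rewrite !realized_coset in * by apply F_proper_subgroup.
    exact (conjugate_family_unique _ _ _ h1 h2).
Qed.

Lemma realized_double_cosets (K : I -> Prop) H :
  realized (sub_coprod K (fun i => act_double (coset_act (F i)))) H <->
  exists i, K i /\ conjugate H (F i).
Proof.
  rewrite realized_sub_coprod. split; intros [i [hi h]]; exists i;
    rewrite realized_double, realized_coset in *; auto; apply F_proper_subgroup.
Qed.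

Lemma realized_twice_double_cosets (K : I -> Prop) H :
  realized_twice (sub_coprod K (fun i => act_double (coset_act (F i)))) H <->
  exists i, K i /\ conjugate H (F i).
Proof.
  rewrite realized_twice_sub_coprod. split.
  - intros [[i [hi h]] | [i [i' [_ [_ [ne [h1 h2]]]]]]].
    + exists i. split; [exact hi |].
      rewrite realized_twice_double, realized_coset in h by (apply F_proper_subgroup || apply not_realized_twice_coset).
      exact h.
    + exfalso. apply ne. rewrite !realized_double, !realized_coset in * by apply F_proper_subgroup.
      exact (conjugate_family_unique _ _ _ h1 h2).
  - intros [i [hi h]]. left. exists i. split; [exact hi |].
    rewrite realized_twice_double, realized_coset by (apply F_proper_subgroup || apply not_realized_twice_coset).
    exact h.
Qed.

Lemma not_realized_fullset_cosets (K : I -> Prop) :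
  ~ realized (sub_coprod K (fun i => coset_act (F i))) fullset.
Proof.
  rewrite realized_cosets. intros [i [_ h]]. exact (not_conjugate_fullset _ (proj2 (F_proper_subgroup i)) h).
Qed.

Lemma not_realized_fullset_double_cosets (K : I -> Prop) :
  ~ realized (sub_coprod K (fun i => act_double (coset_act (F i)))) fullset.
Proof.
  rewrite realized_double_cosets. intros [i [_ h]].
  exact (not_conjugate_fullset _ (proj2 (F_proper_subgroup i)) h).
Qed.

End CosetFamilies.

Section Representatives.
Context {S : Group} {J : Type} (G : J -> S -> Prop) {M : Type} (N : M -> S -> Prop).
Hypothesis hG : forall j, subgroup (G j) /\ proper (G j) /\ ~ normal (G j).
Hypothesis hGrep : forall H : S -> Prop, subgroup H -> proper H -> ~ normal H ->
  exists! j, conjugate H (G j).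
Hypothesis hN : forall m, subgroup (N m) /\ proper (N m) /\ normal (N m).
Hypothesis hNall : forall H : S -> Prop, subgroup H -> proper H -> normal H ->
  exists! m, same_set H (N m).

Lemma G_proper_subgroup j : subgroup (G j) /\ proper (G j).
Proof. split; apply hG. Qed.

Lemma N_proper_subgroup m : subgroup (N m) /\ proper (N m).
Proof. split; apply hN. Qed.

Lemma G_nonconjugate j j' : conjugate (G j) (G j') -> j = j'.
Proof.
  intro hc. destruct (hG j) as [hs [hp hn]]. destruct (hGrep _ hs hp hn) as [j0 [_ u]].
  rewrite <- (u j (conjugate_of_same_set _ _ (fun x => iff_refl _))). apply u. exact hc.
Qed.

Lemma N_nonconjugate m m' : conjugate (N m) (N m') -> m = m'.
Proof.
  intro hc. destruct (hN m) as [hs [hp hn]]. destruct (hNall _ hs hp hn) as [m0 [_ u]].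
  rewrite <- (u m (fun x => iff_refl _)). apply u.
  apply same_set_conjugate_normal; [exact hc | apply hN].
Qed.

Lemma not_conjugate_G_N H j m : conjugate H (G j) -> conjugate H (N m) -> False.
Proof.
  intros hj hm. apply (hG j). apply (normal_conjugate (N m)); [| apply hN].
  apply (conjugate_trans _ H); [apply conjugate_sym |]; assumption.
Qed.

Lemma subgroup_cases H : subgroup H ->
  (forall s, H s) \/ (exists m, same_set H (N m)) \/ (exists j, conjugate H (G j)).
Proof.
  intro hs. destruct (classic (forall s, H s)) as [hf | hnf]; [left; exact hf | right].
  pose proof (proper_of_not_full _ hnf) as hp.
  destruct (classic (normal H)) as [hn | hnn].
  - left. destruct (hNall H hs hp hn) as [m [hm _]]. exists m. exact hm.
  - right. destruct (hGrep H hs hp hnn) as [j [hj _]]. exists j. exact hj.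
Qed.

Lemma type_i_not_fixed (K T : J -> Prop) (L : M -> Prop) :
  ~ realized (act_type_i G N K T L) fullset.
Proof.
  unfold act_type_i. rewrite !realized_sum.
  pose proof (not_realized_fullset_double_cosets G G_proper_subgroup K).
  pose proof (not_realized_fullset_cosets G G_proper_subgroup T).
  pose proof (not_realized_fullset_cosets N N_proper_subgroup L). tauto.
Qed.

Lemma type_ii_fixed (K : J -> Prop) (L : M -> Prop) :
  realized (act_type_ii G N K L) fullset.
Proof. unfold act_type_ii. rewrite realized_sum, realized_point. right. split. Qed.

Lemma type_ii_not_fixed_twice (K : J -> Prop) (L : M -> Prop) :
  ~ realized_twice (act_type_ii G N K L) fullset.
Proof.
  unfold act_type_ii. rewrite realized_twice_sum, !realized_sum.
  pose proof (not_realized_fullset_cosets G G_proper_subgroup K).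
  pose proof (not_realized_fullset_cosets N N_proper_subgroup L).
  pose proof (not_realized_twice_point (S := S) fullset).
  pose proof (realized_twice_realized (P := act_sum (sub_coprod K (fun j => coset_act (G j)))
                                                    (sub_coprod L (fun m => coset_act (N m)))) fullset).
  rewrite realized_sum in *. tauto.
Qed.

Lemma type_iii_fixed_twice (K : J -> Prop) (L : M -> Prop) :
  realized_twice (act_type_iii G N K L) fullset.
Proof.
  unfold act_type_iii. rewrite realized_twice_sum, realized_sum, !realized_point.
  right; right. split; [right |]; split.
Qed.

Variable A : act S.

Definition realized_G_index (j : J) : Prop := realized A (G j).
Definition realized_N_index (m : M) : Prop := realized A (N m).
Definition twice_G_index (j : J) : Prop := realized_twice A (G j).
Definition once_G_index (j : J) : Prop := realized A (G j) /\ ~ realized_twice A (G j).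

Definition class_realized (H : S -> Prop) : Prop :=
  (exists j, realized A (G j) /\ conjugate H (G j)) \/
  (exists m, realized A (N m) /\ conjugate H (N m)).

Lemma realized_class_realized H : subgroup H -> proper H -> realized A H <-> class_realized H.
Proof.
  intros hs [y hy]. split.
  - intro hr. destruct (subgroup_cases H hs) as [hf | [[m hm] | [j hj]]].
    + exfalso. exact (hy (hf y)).
    + right. exists m. split; [apply (realized_same_set _ _ hm), hr | exact (conjugate_of_same_set _ _ hm)].
    + left. exists j. split; [apply (realized_conjugate H); [apply conjugate_sym |]; assumption | exact hj].
  - intros [[j [hr hc]] | [m [hr hc]]]; exact (realized_conjugate _ _ hc hr).
Qed.

Lemma class_realized_proper H : class_realized H -> proper H.
Proof.
  intros [[j [_ h]] | [m [_ h]]]; apply (proper_conjugate _ _ h);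
    [apply G_proper_subgroup | apply N_proper_subgroup].
Qed.

Definition core_act : act S :=
  act_sum (sub_coprod realized_G_index (fun j => coset_act (G j)))
          (sub_coprod realized_N_index (fun m => coset_act (N m))).

Lemma realized_core H : realized core_act H <-> class_realized H.
Proof.
  unfold core_act. rewrite realized_sum, (realized_cosets G G_proper_subgroup),
    (realized_cosets N N_proper_subgroup). reflexivity.
Qed.

Lemma geom_equiv_fixed_case (R : act S) :
  realized A fullset -> realized R fullset ->
  (forall H, proper H -> realized R H <-> class_realized H) ->
  (realized_twice A fullset <-> realized_twice R fullset) -> geom_equiv A R.
Proof.
  intros hA hR hcl hrt. apply geom_equiv_of_realized; [| intros; contradiction | exact hrt].
  intros H hs. destruct (classic (forall s, H s)) as [hf | hnf].
  - pose proof (same_set_fullset _ hf) as e.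
    rewrite (realized_same_set (P := A) _ _ e), (realized_same_set (P := R) _ _ e). tauto.
  - pose proof (proper_of_not_full _ hnf) as hp. rewrite (hcl H hp), realized_class_realized by assumption. reflexivity.
Qed.

Lemma geom_equiv_type_ii : realized A fullset -> ~ realized_twice A fullset ->
  geom_equiv A (act_type_ii G N realized_G_index realized_N_index).
Proof.
  intros hA hA2. apply geom_equiv_fixed_case; [exact hA | apply type_ii_fixed | |].
  - intros H [y hy]. unfold act_type_ii. rewrite realized_sum, realized_point, <- realized_core.
    split; [intros [h | h]; [exact h | exfalso; exact (hy (h y))] | intro h; left; exact h].
  - pose proof (type_ii_not_fixed_twice realized_G_index realized_N_index). tauto.
Qed.

Lemma geom_equiv_type_iii : realized_twice A fullset ->
  geom_equiv A (act_type_iii G N realized_G_index realized_N_index).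
Proof.
  intros hA2. apply geom_equiv_fixed_case; [exact (realized_twice_realized _ hA2) | | |].
  - apply realized_twice_realized, type_iii_fixed_twice.
  - intros H [y hy]. unfold act_type_iii. rewrite realized_sum, realized_sum, !realized_point, <- realized_core.
    split; [intros [[h | h] | h]; [exact h | exfalso; exact (hy (h y)) ..] | intro h; left; left; exact h].
  - pose proof (type_iii_fixed_twice realized_G_index realized_N_index). tauto.
Qed.

Lemma realized_type_i H :
  realized (act_type_i G N twice_G_index once_G_index realized_N_index) H <-> class_realized H.
Proof.
  unfold act_type_i, class_realized. rewrite !realized_sum, (realized_double_cosets G G_proper_subgroup),
    (realized_cosets G G_proper_subgroup), (realized_cosets N N_proper_subgroup).
  unfold twice_G_index, once_G_index, realized_N_index. split.
  - intros [[[j [hj hc]] | [j [hj hc]]] | hm]; [left .. | right; exact hm]; exists j;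
      split; [apply realized_twice_realized; exact hj | exact hc | apply hj | exact hc].
  - intros [[j [hj hc]] | hm]; [left | right; exact hm].
    destruct (classic (realized_twice A (G j))); [left | right]; exists j; tauto.
Qed.

Lemma realized_twice_type_i H j : conjugate H (G j) ->
  realized_twice (act_type_i G N twice_G_index once_G_index realized_N_index) H <->
  realized_twice A (G j).
Proof.
  intro hj. unfold act_type_i.
  rewrite !realized_twice_sum, !realized_sum, (realized_twice_double_cosets G G_proper_subgroup G_nonconjugate),
    (realized_double_cosets G G_proper_subgroup), (realized_cosets G G_proper_subgroup),
    (realized_cosets N N_proper_subgroup).
  pose proof (not_realized_twice_cosets G G_proper_subgroup G_nonconjugate once_G_index H).
  pose proof (not_realized_twice_cosets N N_proper_subgroup N_nonconjugate realized_N_index H).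
  assert (hGj : forall j', conjugate H (G j') -> j' = j)
    by (intros j' h; exact (conjugate_family_unique G G_nonconjugate H j' j h hj)).
  assert (hNm : ~ exists m, realized_N_index m /\ conjugate H (N m))
    by (intros [m [_ hm]]; exact (not_conjugate_G_N H j m hj hm)).
  unfold twice_G_index, once_G_index in *. split.
  - intros [[[j' [h c]] | [h | [[j1 [h1 c1]] [j2 [h2 c2]]]]] | [h | [_ h]]]; try contradiction.
    + rewrite (hGj _ c) in h. exact h.
    + rewrite (hGj _ c1) in h1. rewrite (hGj _ c2) in h2. tauto.
  - intro h. left. left. exists j. auto.
Qed.

Lemma geom_equiv_type_i : ~ realized A fullset ->
  geom_equiv A (act_type_i G N twice_G_index once_G_index realized_N_index).
Proof.
  intro hA. apply geom_equiv_of_realized.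
  - intros H hs. rewrite realized_type_i. split.
    + intro h. destruct (classic (forall s, H s)) as [hf | hnf].
      * exfalso. apply hA, (realized_same_set _ _ (same_set_fullset _ hf)), h.
      * apply (realized_class_realized H hs (proper_of_not_full _ hnf)), h.
    + intro h. apply (realized_class_realized H hs (class_realized_proper _ h)), h.
  - intros H hs hp hn _. destruct (hGrep H hs hp hn) as [j [hj _]].
    rewrite (realized_twice_type_i H j hj).
    split; intro h.
    + apply (realized_twice_conjugate H); [apply conjugate_sym |]; assumption.
    + apply (realized_twice_conjugate (G j)); assumption.
  - pose proof (type_i_not_fixed twice_G_index once_G_index realized_N_index).
    pose proof (realized_twice_realized (P := A) fullset).
    pose proof (realized_twice_realized (P := act_type_i G N twice_G_index once_G_index realized_N_index) fullset).
    tauto.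
Qed.

Lemma representation_exists : inhabited A ->
  rep_type_i G N A \/ rep_type_ii G N A \/ rep_type_iii G N A.
Proof.
  intro hA. destruct (classic (realized_twice A fullset)) as [h2 | h2].
  { right; right. exists realized_G_index, realized_N_index. exact (geom_equiv_type_iii h2). }
  destruct (classic (realized A fullset)) as [h1 | h1].
  { right; left. exists realized_G_index, realized_N_index. exact (geom_equiv_type_ii h1 h2). }
  left. exists twice_G_index, once_G_index, realized_N_index. split; [intros j ht [_ ho]; exact (ho ht) |].
  pose proof (geom_equiv_type_i h1) as e. split; [exact (geom_equiv_inhabited _ _ e hA h1) | exact e].
Qed.

End Representatives.

Theorem theorem3p21 (S : Group) (J : Type) (G : J -> S -> Prop)
  (M : Type) (N : M -> S -> Prop)
  (hG : forall j, subgroup (G j) /\ proper (G j) /\ ~ normal (G j))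
  (hGrep : forall H : S -> Prop, subgroup H -> proper H -> ~ normal H ->
             exists! j, conjugate H (G j))
  (hN : forall m, subgroup (N m) /\ proper (N m) /\ normal (N m))
  (hNall : forall H : S -> Prop, subgroup H -> proper H -> normal H ->
             exists! m, same_set H (N m))
  (A : act S) (hA : inhabited A) :
  (rep_type_i G N A \/ rep_type_ii G N A \/ rep_type_iii G N A) /\
  ~ (rep_type_i G N A /\ rep_type_ii G N A) /\
  ~ (rep_type_i G N A /\ rep_type_iii G N A) /\
  ~ (rep_type_ii G N A /\ rep_type_iii G N A).
Proof.
  split; [exact (representation_exists G N hG hGrep hN hNall A hA) |].
  split; [|split].
  - intros [[K [T [L [_ [hi e1]]]]] [K' [L' e2]]].
    apply (type_i_not_fixed G N hG hN K T L).
    apply (geom_equiv_realized_fullset _ _ (geom_equiv_trans _ _ _ (geom_equiv_sym _ _ e2) e1) hi).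
    apply (type_ii_fixed G N K' L').
  - intros [[K [T [L [_ [_ e1]]]]] [K' [L' e3]]].
    apply (type_i_not_fixed G N hG hN K T L), realized_twice_realized.
    apply (geom_equiv_realized_twice_fullset _ _ (geom_equiv_trans _ _ _ (geom_equiv_sym _ _ e3) e1)).
    apply type_iii_fixed_twice.
  - intros [[K [L e2]] [K' [L' e3]]].
    apply (type_ii_not_fixed_twice G N hG hN K L).
    apply (geom_equiv_realized_twice_fullset _ _ (geom_equiv_trans _ _ _ (geom_equiv_sym _ _ e3) e2)).
    apply type_iii_fixed_twice.
Qed.
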